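(* Let $0<\alpha<1$. Let $(x(t))_{t\ge 0}$ be a sequence of nonnegative reals (the measured transmission attempt rates of a station) and $(\bar{x}(t))_{t\ge0}$ a sequence of positive reals (the estimated maximum fair attempt rate). Define $p(0)=0$ and, for $t\ge 0$, $$p(t+1)=\max\Big(0,\; p(t)+\alpha\Big(\tfrac{x(t)}{\bar{x}(t)}-1\Big)\Big),\qquad P_{NACK}(t)=\min\{p(t),1\}.$$ Suppose there is a constant $c$ with $0<c<1$ such that $x(t)/\bar{x}(t)\le 1-c\,P_{NACK}(t)$ for all $t>0$. Then $\lim_{t\to\infty}p(t)=0$.
   Context: This is the penalty update of an access-point policing algorithm: $p(t)$ is the accumulated penalty of the station at step $t$ and $P_{NACK}(t)$ is the probability with which the access point suppresses acknowledgements of that station's frames at step $t$. The conclusion means that for such (well-behaved) stations the policing algorithm eventually drops no acknowledgements. *)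

From Stdlib Require Import Reals.
Open Scope R_scope.

Fixpoint penalty (alpha : R) (x xbar : nat -> R) (t : nat) : R :=
  match t with
  | O => 0
  | S t' => Rmax 0 (penalty alpha x xbar t' + alpha * (x t' / xbar t' - 1))
  end.

Definition P_NACK (alpha : R) (x xbar : nat -> R) (t : nat) : R :=
  Rmin (penalty alpha x xbar t) 1.

(* While the penalty is at least 1 the hypothesis forces it down by the fixed
   amount alpha*c per step, so it drops below 1 after finitely many steps; from
   then on it contracts geometrically by the factor 1 - alpha*c. *)

From Stdlib Require Import Reals Lra Lia.
Open Scope R_scope.

Section DecayToZero.

Variables (u : nat -> R) (k : R) (N0 : nat).
Hypothesis k_bounds : 0 < k < 1.
Hypothesis u_nonneg : forall t, 0 <= u t.
Hypothesis u_decay : forall t, (N0 <= t)%nat -> u (S t) <= u t - k * Rmin (u t) 1.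

Lemma decay_linear t : (N0 <= t)%nat -> 1 <= u t -> u (S t) <= u t - k.
Proof.
  intros Ht Hge. generalize (u_decay t Ht). rewrite Rmin_right by lra. lra.
Qed.

Lemma decay_contract t : (N0 <= t)%nat -> u t <= 1 -> u (S t) <= (1 - k) * u t.
Proof.
  intros Ht Hle. generalize (u_decay t Ht). rewrite Rmin_left by lra. lra.
Qed.

Lemma decay_linear_or_below_one n :
  u (N0 + n) <= u N0 - INR n * k \/ exists T, (N0 <= T)%nat /\ u T <= 1.
Proof.
  induction n as [|n [IH | IH]]; [left; rewrite Nat.add_0_r; simpl; lra | | now right].
  destruct (Rle_dec 1 (u (N0 + n))) as [Hge | Hlt].
  - left. rewrite Nat.add_succ_r, S_INR.
    generalize (decay_linear (N0 + n) ltac:(lia) Hge). lra.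
  - right. exists (N0 + n)%nat. split; [lia | lra].
Qed.

Lemma decay_reaches_one : exists T, (N0 <= T)%nat /\ u T <= 1.
Proof.
  destruct (INR_unbounded (u N0 / k)) as [n Hn].
  destruct (decay_linear_or_below_one n) as [Hlin | Hex]; [exfalso | exact Hex].
  assert (Hnk : u N0 < INR n * k).
  { apply (Rmult_lt_compat_r k) in Hn; [|lra].
    unfold Rdiv in Hn. rewrite Rmult_assoc, Rinv_l, Rmult_1_r in Hn by lra. exact Hn. }
  generalize (u_nonneg (N0 + n)). lra.
Qed.

Lemma decay_geometric_tail T :
  (N0 <= T)%nat -> u T <= 1 -> forall n, u (T + n) <= (1 - k) ^ n.
Proof.
  intros HT Hle. induction n as [|n IH]; [rewrite Nat.add_0_r; simpl; lra|].
  assert (Hpow : (1 - k) ^ n <= 1).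
  { rewrite <- (pow1 n) at 2. apply pow_incr. lra. }
  rewrite Nat.add_succ_r. simpl.
  apply Rle_trans with ((1 - k) * u (T + n)%nat).
  - apply decay_contract; [lia | lra].
  - apply Rmult_le_compat_l; lra.
Qed.

Lemma decay_cv0 : Un_cv u 0.
Proof.
  destruct decay_reaches_one as [T [HT Hle]].
  apply (CV_shift u T). intros eps Heps.
  destruct (pow_lt_1_zero (1 - k) ltac:(rewrite Rabs_right; lra) eps Heps) as [N HN].
  exists N. intros n Hn. unfold R_dist.
  rewrite Rminus_0_r, Rabs_right by (apply Rle_ge, u_nonneg).
  rewrite Nat.add_comm.
  apply Rle_lt_trans with ((1 - k) ^ n); [now apply decay_geometric_tail|].
  apply Rle_lt_trans with (Rabs ((1 - k) ^ n)); [apply Rle_abs | now apply HN].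
Qed.

End DecayToZero.

Lemma penalty_nonneg alpha x xbar t : 0 <= penalty alpha x xbar t.
Proof. destruct t; simpl; [lra | apply Rmax_l]. Qed.

Lemma penalty_S_le alpha c x xbar t :
  0 <= alpha <= 1 -> 0 <= c <= 1 -> x t / xbar t <= 1 - c * P_NACK alpha x xbar t ->
  penalty alpha x xbar (S t)
  <= penalty alpha x xbar t - alpha * c * Rmin (penalty alpha x xbar t) 1.
Proof.
  unfold P_NACK. intros Ha Hc Hrate. simpl.
  set (p := penalty alpha x xbar t) in *.
  assert (Hm0 : 0 <= Rmin p 1) by (apply Rmin_glb; [apply penalty_nonneg | lra]).
  assert (Hmp : Rmin p 1 <= p) by apply Rmin_l.
  assert (Hac : 0 <= alpha * c <= 1) by (split; nra).
  apply Rmax_lub; nra.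
Qed.

Theorem theorem1 (alpha c : R) (x xbar : nat -> R) :
  0 < alpha < 1 ->
  (forall t, 0 <= x t) ->
  (forall t, 0 < xbar t) ->
  0 < c < 1 ->
  (forall t : nat, (0 < t)%nat -> x t / xbar t <= 1 - c * P_NACK alpha x xbar t) ->
  Un_cv (penalty alpha x xbar) 0.
Proof.
  intros Ha _ _ Hc Hrate.
  apply (decay_cv0 _ (alpha * c) 1%nat).
  - split; nra.
  - apply penalty_nonneg.
  - intros t Ht. apply penalty_S_le; [lra | lra | apply Hrate; lia].
Qed.
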